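(* Let $P$ be a partial order on a finite set $V$. If $A$ is an antichain of $P$, then $e(P)\ge\sum_{v\in A}e(P\setminus v)$. If $S$ is a cutset of $P$, then $e(P)\le\sum_{v\in S}e(P\setminus v)$. Moreover, if $I\subseteq V$ is either a cutset or an antichain of $P$, then $e(P)=\sum_{v\in I}e(P\setminus v)$ if and only if $I$ is both a cutset and an antichain of $P$.
   Context: $e(Q)$ denotes the number of linear extensions of a finite poset $Q$, where a linear extension of a poset on an $m$-element set is an order-preserving bijection onto $[m]$ (strict order goes to strict order); the empty poset has one linear extension. $P\setminus v$ denotes the subposet of $P$ induced on $V\setminus\{v\}$. A cutset of $P$ is a subset of $V$ that intersects every maximal chain of $P$. *)

From mathcomp Require Import all_boot.
Set Implicit Arguments. Unset Strict Implicit. Unset Printing Implicit Defensive.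

Definition is_porder (T : finType) (le : rel T) : Prop :=
  [/\ reflexive le, antisymmetric le & transitive le].

Definition slt (T : finType) (le : rel T) : rel T := fun x y => (x != y) && le x y.

(* Injectivity into 'I_#|T|
   is equivalent to bijectivity (finite sets of the same size). *)
Definition linext (T : finType) (le : rel T) : {set {ffun T -> 'I_#|T|}} :=
  [set f : {ffun T -> 'I_#|T|} | injectiveb f &&
     [forall x, forall y, slt le x y ==> (f x < f y)%N]].

Definition nlinext (T : finType) (le : rel T) : nat := #|linext le|.

Definition delv_rel (T : finType) (le : rel T) (v : T) : rel {x : T | x != v} :=
  fun x y => le (val x) (val y).
Arguments delv_rel {T} le v.

Definition comparable (T : finType) (le : rel T) (x y : T) : bool :=
  le x y || le y x.

Definition is_chain (T : finType) (le : rel T) (C : {set T}) : bool :=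
  [forall x in C, forall y in C, comparable le x y].

Definition is_maximal_chain (T : finType) (le : rel T) (C : {set T}) : bool :=
  is_chain le C && [forall D : {set T}, (C \proper D) ==> ~~ is_chain le D].

Definition is_antichain (T : finType) (le : rel T) (A : {set T}) : bool :=
  [forall x in A, forall y in A, (x != y) ==> ~~ comparable le x y].

Definition is_cutset (T : finType) (le : rel T) (S : {set T}) : bool :=
  [forall C : {set T}, is_maximal_chain le C ==> (C :&: S != set0)].

From Pilot Require Import Defs.
From mathcomp Require Import all_boot.
Set Implicit Arguments. Unset Strict Implicit. Unset Printing Implicit Defensive.

(* Write e(B) for the number of linear extensions of the subposet on B.  The
   top label of a linear extension sits on a maximal element, hence
   e(B) = sum_(m maximal in B) e(B \ m).  Everything is proved for any A
   contained in any B, by induction on |B|.  For m maximal in B, replace A in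
   B \ m by X_m = (A \ m) u N_m, where N_m is empty unless m is in A, in
   which case it consists of the elements that become maximal when m is
   deleted.  Deleting m preserves antichains and cutsets in this form, and
   conversely A is a cutset (an antichain) when every X_m is one.  Expanding each e(B \ v) by its
   maximal elements and regrouping gives
     sum_(v in A) e(B \ v)
       = sum_m (sum_(w in X_m) e(B \ m \ w) + sum_(w in (A \ m) n N_m) e(B \ m \ w)),
   and the overlap term vanishes for antichains.  Comparing term by term with
   the recursion for e(B) gives the inequalities; equality of sums of termwise
   inequalities forces termwise equality, which yields the equality cases. *)

Lemma card_ord_range (N k : nat) : k <= N ->
  #|[set i : 'I_N.+1 | 0 < i <= k]| = k.
Proof.
move=> le_kN; have lt_k (i : 'I_k) : i.+1 < N.+1 by rewrite ltnS (leq_trans (ltn_ord i)).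
have -> : [set i : 'I_N.+1 | 0 < i <= k] = [set inord i.+1 | i : 'I_k].
  apply/setP => j; rewrite inE; apply/idP/imsetP.
  - move=> /andP [j_gt0 le_jk]; have lt_jk : j.-1 < k by rewrite prednK.
    by exists (Ordinal lt_jk) => //; apply: val_inj; rewrite /= inordK prednK.
  - by move=> [i _ ->]; rewrite inordK ?lt_k //= ltn_ord.
rewrite card_imset ?card_ord // => i i' /(congr1 val) /=.
by rewrite !inordK // => -[] /val_inj.
Qed.

Lemma sum_nat_of_bool (I : finType) (X : {set I}) (P : pred I) :
  \sum_(i in X) (P i : nat) = #|[set i in X | P i]|.
Proof.
rewrite -sum1_card big_mkcond /= [RHS]big_mkcond /=; apply: eq_bigr => i _.
by rewrite inE; case: (i \in X); case: (P i).
Qed.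

Lemma sum_setUI (I : finType) (X Y : {set I}) (F : I -> nat) :
  \sum_(i in X :|: Y) F i + \sum_(i in X :&: Y) F i =
  \sum_(i in X) F i + \sum_(i in Y) F i.
Proof.
rewrite (big_setID X) /= setUK setDUl setDv set0U.
rewrite [in RHS](big_setID X (A := Y)) /= (setIC Y X).
by rewrite -addnA [_ + \sum_(i in _ :&: _) _]addnC.
Qed.

Lemma sum_eq_leq_pointwise (I : finType) (P : pred I) (E1 E2 : I -> nat) :
  (forall i, P i -> E1 i <= E2 i) ->
  \sum_(i | P i) E1 i = \sum_(i | P i) E2 i -> forall i, P i -> E1 i = E2 i.
Proof.
move=> le_E /eqP; rewrite (leqif_sum (fun i Pi => leqif_eq (le_E i Pi))).
by move=> /forallP eq_E i Pi; apply/eqP; apply: (implyP (eq_E i)).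
Qed.

Section Poset.

Variables (T : finType) (le : rel T).
Hypothesis le_order : is_porder le.

Let le_refl : reflexive le. Proof. by case: le_order. Qed.
Let le_anti : antisymmetric le. Proof. by case: le_order. Qed.
Let le_trans : transitive le. Proof. by case: le_order. Qed.

Lemma sltP x y : reflect (x <> y /\ le x y) (slt le x y).
Proof. by apply: (iffP andP) => [[/eqP ? ?]|[/eqP ? ?]]. Qed.

Lemma slt_irr x : slt le x x = false.
Proof. by rewrite /slt eqxx. Qed.

Lemma slt_le_trans x y z : slt le x y -> le y z -> slt le x z.
Proof.
move=> /sltP [neq_xy le_xy] le_yz; apply/sltP; split; last exact: le_trans le_yz.
by move=> eq_xz; subst z; apply: neq_xy; apply: le_anti; rewrite le_xy le_yz.
Qed.

Lemma comparable_sym x y : Defs.comparable le x y = Defs.comparable le y x.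
Proof. by rewrite /Defs.comparable orbC. Qed.

Lemma slt_comparable x y : slt le x y -> Defs.comparable le x y.
Proof. by case/andP => _ le_xy; rewrite /Defs.comparable le_xy. Qed.

Lemma comparable_slt x y :
  x != y -> Defs.comparable le x y -> slt le x y \/ slt le y x.
Proof.
move=> neq_xy /orP [le_xy|le_yx]; [left | right]; rewrite /slt.
- by rewrite neq_xy le_xy.
- by rewrite eq_sym neq_xy le_yx.
Qed.

Lemma chainP (C : {set T}) :
  reflect {in C &, forall x y, Defs.comparable le x y} (is_chain le C).
Proof.
apply: (iffP forallP) => [H x y Cx Cy|H x].
- by have := H x; rewrite Cx => /forallP /(_ y); rewrite Cy.
- by apply/implyP => Cx; apply/forallP => y; apply/implyP; apply: H.
Qed.

Lemma antichainP (A : {set T}) :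
  reflect {in A &, forall x y, x != y -> ~~ Defs.comparable le x y}
          (is_antichain le A).
Proof.
apply: (iffP forallP) => [H x y Ax Ay|H x].
- by have := H x; rewrite Ax => /forallP /(_ y); rewrite Ay /= => /implyP.
- apply/implyP => Ax; apply/forallP => y; apply/implyP => Ay.
  by apply/implyP; apply: H.
Qed.

Lemma antichain_sltP (A : {set T}) :
  reflect {in A &, forall x y, ~~ slt le x y} (is_antichain le A).
Proof.
apply: (iffP (antichainP A)) => [antiA x y Ax Ay|nlt x y Ax Ay neq_xy].
- apply/negP => lt_xy; have /andP [neq_xy _] := lt_xy.
  by have := antiA x y Ax Ay neq_xy; rewrite slt_comparable.
- apply/negP => /(comparable_slt neq_xy) [lt_xy|lt_yx].
  + by have := nlt x y Ax Ay; rewrite lt_xy.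
  + by have := nlt y x Ay Ax; rewrite lt_yx.
Qed.

Lemma chain_sub (C D : {set T}) :
  C \subset D -> is_chain le D -> is_chain le C.
Proof. by move=> /subsetP sCD /chainP chD; apply/chainP => x y /sCD Dx /sCD; apply: chD. Qed.

Lemma chain_le1 (C : {set T}) : #|C| <= 1 -> is_chain le C.
Proof.
move=> /card_le1_eqP C_le1; apply/chainP => x y Cx Cy.
by rewrite (C_le1 x y Cx Cy) /Defs.comparable le_refl.
Qed.

Lemma chainU1 (C : {set T}) y :
  is_chain le C -> {in C, forall z, Defs.comparable le y z} ->
  is_chain le (y |: C).
Proof.
move=> /chainP chC cmp_y; apply/chainP => a b; rewrite !inE.
move=> /predU1P [->|Ca] /predU1P [->|Cb].
- by rewrite /Defs.comparable le_refl.
- exact: cmp_y.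
- by rewrite comparable_sym; apply: cmp_y.
- exact: chC.
Qed.

Definition maximals (B : {set T}) : {set T} :=
  [set m in B | [forall y in B, ~~ slt le m y]].

Lemma maximalsP (B : {set T}) m :
  reflect (m \in B /\ {in B, forall y, ~~ slt le m y}) (m \in maximals B).
Proof.
rewrite inE; apply: (iffP andP) => [[Bm /forallP max_m]|[Bm max_m]]; split => //.
- by move=> y By; have := max_m y; rewrite By.
- by apply/forallP => y; apply/implyP; apply: max_m.
Qed.

Lemma maximals_sub (B : {set T}) : maximals B \subset B.
Proof. by apply/subsetP => x /maximalsP []. Qed.

Lemma exists_maximal (B : {set T}) x :
  x \in B -> exists2 m, m \in maximals B & le x m.
Proof.
(* Among the elements above [x], one with the largest down-set is maximal. *)
move=> Bx; set B' := [set y in B | le x y].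
have B'x : x \in B' by rewrite inE le_refl Bx.
case: (@arg_maxnP T x (mem B') (fun c => #|[set y | le y c]|) B'x) => m.
rewrite /= inE => /andP [Bm le_xm] m_biggest; exists m => //.
apply/maximalsP; split => // z Bz; apply/negP => /sltP [neq_mz le_mz].
have /m_biggest : z \in B' by rewrite inE Bz (le_trans le_xm le_mz).
apply/negP; rewrite -ltnNge; apply: proper_card; apply/properP; split.
- by apply/subsetP => y; rewrite !inE => le_ym; apply: le_trans le_mz.
- exists z; first by rewrite inE le_refl.
  by rewrite inE; apply/negP => le_zm; apply: neq_mz; apply: le_anti; rewrite le_mz.
Qed.

Lemma notin_maximals (B : {set T}) x :
  x \in B -> x \notin maximals B -> exists2 y, y \in B & slt le x y.
Proof.
move=> Bx; rewrite inE Bx negb_forall => /existsP [y].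
by rewrite negb_imply negbK => /andP [By lt_xy]; exists y.
Qed.

Lemma maximalsD1 (B : {set T}) x v :
  x \in maximals B -> x != v -> x \in maximals (B :\ v).
Proof.
move=> /maximalsP [Bx max_x] neq_xv; apply/maximalsP; split; first by rewrite !inE neq_xv.
by move=> y /setD1P [_ By]; apply: max_x.
Qed.

Lemma maximals_antichain (B : {set T}) : is_antichain le (maximals B).
Proof.
by apply/antichain_sltP => x y /maximalsP [_ max_x] /maximalsP [By _]; apply: max_x.
Qed.

Lemma chain_maximals_eq (B C : {set T}) x y :
  is_chain le C -> x \in C -> y \in C -> x \in maximals B -> y \in maximals B ->
  x = y.
Proof.
move=> chC Cx Cy max_x max_y; apply/eqP; apply: contraTT (chainP _ chC x y Cx Cy).
exact: (antichainP _ (maximals_antichain B) x y max_x max_y).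
Qed.

Definition new_maximals (B : {set T}) m : {set T} :=
  maximals (B :\ m) :\: maximals B.

Lemma in_new_maximals (B : {set T}) m u :
  (u \in new_maximals B m) = (u \in maximals (B :\ m)) && (u \notin maximals B).
Proof. by rewrite inE andbC. Qed.

Lemma new_maximals_below (B : {set T}) m u :
  u \in new_maximals B m -> [/\ u \in B, u != m, m \in B & slt le u m].
Proof.
rewrite in_new_maximals => /andP [max_u nmax_u].
have /setD1P [neq_um Bu] := subsetP (maximals_sub _) u max_u.
have [y By lt_uy] := notin_maximals Bu nmax_u.
have [/eqP eq_ym|neq_ym] := boolP (y == m); first by subst y.
by move/maximalsP: max_u => [_ /(_ y)]; rewrite !inE neq_ym By lt_uy => /(_ isT).
Qed.

Lemma new_maximals_notin_maximals (B : {set T}) v :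
  v \notin maximals B -> new_maximals B v = set0.
Proof.
move=> nmax_v; apply/setP => u; rewrite in_set0; apply/negP => new_u.
have [_ _ Bv lt_uv] := new_maximals_below new_u.
have [z Bz lt_vz] := notin_maximals Bv nmax_v.
have neq_zv : z != v by apply: contraTneq lt_vz => ->; rewrite slt_irr.
move: new_u; rewrite in_new_maximals => /andP [/maximalsP [_ /(_ z)] + _].
by rewrite !inE neq_zv Bz (slt_le_trans lt_uv (proj2 (sltP _ _ lt_vz))) => /(_ isT).
Qed.

Definition is_maximal_chain_in (B C : {set T}) : bool :=
  [&& C \subset B, is_chain le C &
   [forall D : {set T}, (C \proper D) && (D \subset B) ==> ~~ is_chain le D]].

Definition is_cutset_in (B S : {set T}) : bool :=
  [forall C : {set T}, is_maximal_chain_in B C ==> (C :&: S != set0)].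

Lemma maximal_chain_inP (B C : {set T}) :
  reflect [/\ C \subset B, is_chain le C &
             forall D : {set T}, C \proper D -> D \subset B -> ~~ is_chain le D]
          (is_maximal_chain_in B C).
Proof.
apply: (iffP and3P) => [[sCB chC /forallP maxC]|[sCB chC maxC]]; split => //.
- by move=> D ltCD sDB; have := maxC D; rewrite ltCD sDB.
- by apply/forallP => D; apply/implyP => /andP [ltCD sDB]; apply: maxC.
Qed.

Lemma not_maximal_chain_in (B C : {set T}) :
  C \subset B -> is_chain le C -> ~~ is_maximal_chain_in B C ->
  exists D : {set T}, [/\ C \proper D, D \subset B & is_chain le D].
Proof.
move=> sCB chC; rewrite /is_maximal_chain_in sCB chC negb_forall => /existsP [D].
by rewrite negb_imply negbK => /andP [/andP [ltCD sDB] chD]; exists D.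
Qed.

Lemma cutset_inP (B S : {set T}) :
  reflect (forall C, is_maximal_chain_in B C -> exists2 x, x \in C & x \in S)
          (is_cutset_in B S).
Proof.
apply: (iffP forallP) => [cutS C maxC|cutS C].
- have := cutS C; rewrite maxC => /set0Pn [x /setIP [Cx Sx]]; by exists x.
- apply/implyP => /cutS [x Cx Sx]; apply/set0Pn; exists x; exact/setIP.
Qed.

Lemma maximal_chain_in_top (B C : {set T}) x :
  x \in B -> is_maximal_chain_in B C -> exists2 c, c \in C & c \in maximals B.
Proof.
move=> Bx /maximal_chain_inP [sCB chC maxC].
have [c0 Cc0] : exists c0, c0 \in C.
  apply/set0Pn; apply: contraTneq isT => C0.
  have ne_x : [set x] != set0 by apply/set0Pn; exists x; rewrite inE.
  move: (maxC [set x]); rewrite C0 proper0 ne_x sub1set Bx chain_le1 ?cards1 //.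
  by move/(_ isT isT).
have [c /maximalsP [Cc max_c] _] := exists_maximal Cc0.
exists c => //; apply/maximalsP; split; first exact: subsetP Cc.
move=> y By; apply/negP => lt_cy.
have Cny : y \notin C by apply: contraTN lt_cy => /max_c.
have: is_chain le (y |: C).
  apply: chainU1 => // z Cz; have [/eqP ->|neq_zc] := boolP (z == c).
    by rewrite comparable_sym slt_comparable.
  have /orP [le_zc|le_cz] := chainP _ chC z c Cz Cc.
    by rewrite /Defs.comparable (le_trans le_zc (proj2 (sltP _ _ lt_cy))) orbT.
  by have := max_c z Cz; rewrite /slt eq_sym neq_zc le_cz.
apply/negP; apply: maxC; first by rewrite properUr // sub1set.
by rewrite subUset sub1set By.
Qed.

Lemma maximal_chain_in_sub (B B' C : {set T}) :
  C \subset B' -> B' \subset B -> is_maximal_chain_in B C ->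
  is_maximal_chain_in B' C.
Proof.
move=> sCB' sB'B /maximal_chain_inP [_ chC maxC]; apply/maximal_chain_inP.
by split=> // D ltCD sDB'; apply: maxC ltCD (subset_trans sDB' sB'B).
Qed.

Lemma maximal_chain_inD1 (B C : {set T}) m :
  m \in B -> is_maximal_chain_in (B :\ m) C ->
  is_maximal_chain_in B C \/ is_maximal_chain_in B (m |: C).
Proof.
move=> Bm maxC; have /maximal_chain_inP [sCBm chC maxCm] := maxC.
have Cnm : m \notin C by apply: contraTN isT => /(subsetP sCBm); rewrite !inE eqxx.
have sCB : C \subset B := subset_trans sCBm (subD1set B m).
have [|/(not_maximal_chain_in sCB chC) [D [ltCD sDB chD]]] := boolP (is_maximal_chain_in B C).
  by left.
right; have Dm : m \in D.
  apply: contraTT chD => Dnm; apply: maxCm => //.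
  by apply/subsetP => y Dy; rewrite !inE (subsetP sDB _ Dy) andbT; apply: contraNneq Dnm => <-.
apply/maximal_chain_inP; split.
- by rewrite subUset sub1set Bm sCB.
- by apply: chain_sub chD; rewrite subUset sub1set Dm proper_sub.
move=> E ltE sEB; apply/negP => chE; have /properP [sCmE [e Ee Ene]] := ltE.
have sCE : C \subset E by apply: subset_trans sCmE; apply: subsetUr.
apply: (negP (maxCm (E :\ m) _ (setSD _ sEB))) (chain_sub (subD1set E m) chE).
apply/properP; split.
- by apply/subsetP => y Cy; rewrite !inE (subsetP sCE _ Cy) andbT; apply: contraNneq Cnm => <-.
- exists e; last by apply: contra Ene => Ce; rewrite inE Ce orbT.
  by rewrite !inE Ee andbT; apply: contra Ene => /eqP ->; rewrite setU11.
Qed.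

Lemma maximal_chain_inD1_greatest (B C : {set T}) c :
  c \in B -> {in B, forall z, le z c} -> is_maximal_chain_in B C ->
  is_maximal_chain_in (B :\ c) (C :\ c).
Proof.
move=> Bc le_c /maximal_chain_inP [sCB chC maxC]; apply/maximal_chain_inP; split.
- exact: setSD.
- exact: chain_sub (subD1set C c) chC.
move=> D ltCD sDBc; apply/negP => chD.
have sDB : D \subset B := subset_trans sDBc (subD1set B c).
have: is_chain le (c |: D).
  by apply: chainU1 => // z Dz; rewrite /Defs.comparable le_c ?orbT ?(subsetP sDB).
apply/negP; apply: maxC; last by rewrite subUset sub1set Bc sDB.
have /properP [sCcD [e De Cnce]] := ltCD; apply/properP; split.
- apply/subsetP => y Cy; have [->|neq_yc] := eqVneq y c; first exact: setU11.
  by rewrite inE (subsetP sCcD) ?orbT // !inE neq_yc.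
- exists e; first by rewrite !inE De orbT.
  have /setD1P [neq_ec _] := subsetP sDBc e De.
  by apply: contra Cnce => Ce; rewrite !inE neq_ec.
Qed.

Definition promoted (A B : {set T}) m : {set T} :=
  if m \in A then new_maximals B m else set0.

Definition shift (A B : {set T}) m : {set T} := (A :\ m) :|: promoted A B m.

Lemma in_promoted (A B : {set T}) m u :
  (u \in promoted A B m) = (m \in A) && (u \in new_maximals B m).
Proof. by rewrite /promoted; case: (m \in A); rewrite ?inE. Qed.

Lemma promoted_maximal (A B : {set T}) m u :
  u \in promoted A B m -> {in B :\ m, forall z, ~~ slt le u z}.
Proof. by rewrite in_promoted in_new_maximals => /and3P [_ /maximalsP []]. Qed.

Lemma shift_sub (A B : {set T}) m : A \subset B -> shift A B m \subset B :\ m.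
Proof.
move=> sAB; rewrite subUset setSD //=; apply/subsetP => u.
by rewrite in_promoted in_new_maximals => /and3P [_ /maximalsP []].
Qed.

Lemma overlap_antichain (A B : {set T}) m :
  is_antichain le A -> (A :\ m) :&: promoted A B m = set0.
Proof.
move=> /antichain_sltP antiA; apply/setP => x; rewrite in_set0 in_setI in_setD1 in_promoted.
apply/negP => /andP [/andP [_ Ax] /andP [Am /new_maximals_below [_ _ _ lt_xm]]].
by have := antiA x m Ax Am; rewrite lt_xm.
Qed.

Lemma shift_antichain (A B : {set T}) m :
  A \subset B -> is_antichain le A -> is_antichain le (shift A B m).
Proof.
move=> sAB /antichain_sltP antiA; apply/antichain_sltP => x y.
move=> /setUP [/setD1P [_ Ax]|Px] Sy; last first.
  by apply: promoted_maximal Px _ _; apply: subsetP (shift_sub m sAB) y Sy.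
case/setUP: Sy => [/setD1P [_ Ay]|]; first exact: antiA.
rewrite in_promoted => /andP [Am /new_maximals_below [_ _ _ /andP [_ le_ym]]].
by apply: contraNN (antiA x m Ax Am) => /slt_le_trans; apply.
Qed.

Lemma shift_cutset (A B : {set T}) m x0 :
  m \in maximals B -> x0 \in B :\ m -> is_cutset_in B A ->
  is_cutset_in (B :\ m) (shift A B m).
Proof.
move=> max_m Bx0 /cutset_inP cutA; apply/cutset_inP => C maxC.
have Bm : m \in B by case/maximalsP: max_m.
have /maximal_chain_inP [sCBm _ _] := maxC.
have Cnm : m \notin C by apply: contraTN isT => /(subsetP sCBm); rewrite !inE eqxx.
have shiftC x : x \in C -> x \in A -> x \in shift A B m.
  by move=> Cx Ax; rewrite !inE Ax andbT; apply/orP; left; apply: contraNneq Cnm => <-.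
have [/cutA [x Cx Ax]|maxmC] := maximal_chain_inD1 Bm maxC.
  by exists x; last exact: shiftC.
have [x /setU1P [eq_xm|Cx] Ax] := cutA _ maxmC; last by exists x; last exact: shiftC.
subst x; rename Ax into Am; have [c Cc max_c] := maximal_chain_in_top Bx0 maxC.
exists c => //; apply/setUP; right; rewrite in_promoted Am in_new_maximals max_c /=.
have neq_cm : c != m by apply: contraNneq Cnm => <-.
apply/negP => max'_c; have /maximal_chain_inP [_ chmC _] := maxmC.
case/negP: neq_cm; apply/eqP.
exact: chain_maximals_eq chmC (setU1r m Cc) (setU11 m C) max'_c max_m.
Qed.

Lemma cutset_in_of_shift (A B : {set T}) x0 :
  x0 \in B -> {in maximals B, forall m, is_cutset_in (B :\ m) (shift A B m)} ->
  is_cutset_in B A.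
Proof.
move=> Bx0 cut_shift; apply/cutset_inP => C maxC.
have /maximal_chain_inP [sCB chC _] := maxC.
have [c Cc max_c] := maximal_chain_in_top Bx0 maxC.
have [Ac|Anc] := boolP (c \in A); first by exists c.
have [/existsP [m /andP [max_m neq_mc]]|] := boolP [exists m in maximals B, m != c].
  have Cnm : m \notin C.
    by apply: contraNN neq_mc => Cm; apply/eqP; apply: chain_maximals_eq chC Cm Cc max_m max_c.
  have sCBm : C \subset B :\ m.
    by apply/subsetP => y Cy; rewrite !inE (subsetP sCB) // andbT; apply: contraNneq Cnm => <-.
  have /cutset_inP := cut_shift m max_m.
  case/(_ C (maximal_chain_in_sub sCBm (subD1set B m) maxC)) => x Cx.
  case/setUP => [/setD1P [_ Ax]|Px]; first by exists x.
  have neq_xc : x != c.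
    by apply: contraTneq Px => ->; rewrite in_promoted in_new_maximals max_c !andbF.
  move: Px; rewrite in_promoted in_new_maximals => /and3P [_ max'_x _].
  have max'_c : c \in maximals (B :\ m) by apply: maximalsD1; rewrite // eq_sym.
  by case/negP: neq_xc; apply/eqP; apply: chain_maximals_eq chC Cx Cc max'_x max'_c.
rewrite negb_exists => /forallP only_c.
have le_c : {in B, forall z, le z c}.
  move=> z Bz; have [m max_m le_zm] := exists_maximal Bz.
  by have := only_c m; rewrite max_m negbK => /eqP <-.
have /maximalsP [Bc _] := max_c.
have /cutset_inP := cut_shift c max_c.
case/(_ _ (maximal_chain_inD1_greatest Bc le_c maxC)) => x /setD1P [_ Cx].
case/setUP => [/setD1P [_ Ax]|]; first by exists x.
by rewrite in_promoted (negbTE Anc).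
Qed.

Lemma antichain_of_shift (A B : {set T}) :
  A \subset B ->
  {in maximals B, forall m,
     is_antichain le (shift A B m) /\ (A :\ m) :&: promoted A B m = set0} ->
  is_antichain le A.
Proof.
move=> sAB anti_shift; apply/antichain_sltP => a b Aa Ab; apply/negP => lt_ab.
have neq_ab : a != b by case/andP: lt_ab.
have in_shift m x : x \in A -> x != m -> x \in shift A B m.
  by move=> Ax neq_xm; rewrite !inE Ax neq_xm.
have not_both m : m \in maximals B -> a != m -> b != m -> False.
  move=> max_m neq_am neq_bm; have [/antichain_sltP antiS _] := anti_shift m max_m.
  by have := antiS a b (in_shift m a Aa neq_am) (in_shift m b Ab neq_bm); rewrite lt_ab.
have [m max_m le_bm] := exists_maximal (subsetP sAB b Ab).
have neq_am : a != m.
  apply: contraTneq max_m => <-; apply/negP => /maximalsP [_ /(_ b (subsetP sAB b Ab))].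
  by rewrite lt_ab.
have [eq_bm|] := eqVneq b m; last exact: not_both.
subst m; have [_ overlap0] := anti_shift b max_m.
have Ba : a \in B :\ b by rewrite !inE neq_ab (subsetP sAB).
have nmax_a : a \notin maximals (B :\ b).
  apply: contraTN isT => max'_a; move/setP: overlap0 => /(_ a).
  rewrite in_set0 in_setI in_setD1 neq_ab Aa in_promoted Ab in_new_maximals max'_a /=.
  by move/negbT; rewrite negbK => /maximalsP [_ /(_ b (subsetP sAB b Ab))]; rewrite lt_ab.
have [y By lt_ay] := notin_maximals Ba nmax_a.
have [x max'_x le_yx] := exists_maximal By.
have lt_ax : slt le a x := slt_le_trans lt_ay le_yx.
have /setD1P [neq_xb Bx] := subsetP (maximals_sub _) x max'_x.
have [max_x|nmax_x] := boolP (x \in maximals B).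
  by apply: (not_both x max_x); [case/andP: lt_ax | rewrite eq_sym].
have [/antichain_sltP antiS _] := anti_shift b max_m.
have Sx : x \in shift A B b.
  by apply/setUP; right; rewrite in_promoted Ab in_new_maximals max'_x.
by have := antiS a x (in_shift b a Aa neq_ab) Sx; rewrite lt_ax.
Qed.

(* A linear extension of the subposet induced on [B] is encoded as a labelling
   of the whole of [T], by [1, ..., #|B|] on [B] and by [0] off [B]; the
   shift by one keeps the labels of [B] apart from the junk label [0]. *)
Definition linext_on (B : {set T}) : {set {ffun T -> 'I_#|T|.+1}} :=
  [set f : {ffun T -> 'I_#|T|.+1} |
     [&& [forall x, (x \notin B) ==> (f x == ord0)],
         [forall x in B, 0 < f x <= #|B|],
         [forall x in B, forall y in B, (f x == f y) ==> (x == y)] &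
         [forall x in B, forall y in B, slt le x y ==> (f x < f y)]]].

Definition nlinext_on (B : {set T}) : nat := #|linext_on B|.

Lemma linext_onP (B : {set T}) (f : {ffun T -> 'I_#|T|.+1}) :
  reflect [/\ forall x, x \notin B -> f x = ord0,
              {in B, forall x, 0 < f x <= #|B|},
              {in B &, injective f} &
              {in B &, forall x y, slt le x y -> f x < f y}]
          (f \in linext_on B).
Proof.
rewrite inE; apply: (iffP and4P).
  move=> [/forallP off /forallP range /forallP inj /forallP mono]; split.
  - by move=> x Bx; move: (off x); rewrite Bx => /eqP.
  - by move=> x Bx; move: (range x); rewrite Bx.
  - move=> x y Bx By fxy; move: (inj x); rewrite Bx => /forallP /(_ y).
    by rewrite By fxy eqxx /= => /eqP.
  - move=> x y Bx By; move: (mono x); rewrite Bx => /forallP /(_ y).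
    by rewrite By /= => /implyP.
move=> [off range inj mono]; split; apply/forallP => x; apply/implyP => Bx.
- by rewrite off.
- exact: range.
- by apply/forallP => y; apply/implyP => By; apply/implyP => /eqP /inj ->.
- by apply/forallP => y; apply/implyP => By; apply/implyP; apply: mono.
Qed.

Lemma inord_card (B : {set T}) : (inord #|B| : 'I_#|T|.+1) = #|B| :> nat.
Proof. by rewrite inordK // ltnS max_card. Qed.

Lemma linext_on_top (B : {set T}) f :
  f \in linext_on B -> 0 < #|B| -> exists2 m, m \in B & f m = #|B| :> nat.
Proof.
move=> /linext_onP [_ range inj _] B_gt0.
have le_BT : #|B| <= #|T| by apply: max_card.
have labels : f @: B = [set i : 'I_#|T|.+1 | 0 < i <= #|B|].
  apply/eqP; rewrite eqEcard card_ord_range // card_in_imset // leqnn andbT.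
  by apply/subsetP => _ /imsetP [x Bx ->]; rewrite inE range.
have : inord #|B| \in f @: B by rewrite labels inE inord_card B_gt0 leqnn.
by case/imsetP => m Bm top_m; exists m; rewrite // -top_m inord_card.
Qed.

Definition extend_top (B : {set T}) m (g : {ffun T -> 'I_#|T|.+1}) :
    {ffun T -> 'I_#|T|.+1} :=
  [ffun x => if x == m then inord #|B| else g x].

Lemma extend_top_linext_on (B : {set T}) m g :
  m \in maximals B -> g \in linext_on (B :\ m) -> extend_top B m g \in linext_on B.
Proof.
move=> /maximalsP [Bm max_m] /linext_onP [off range inj mono].
have below x : x \in B -> x != m -> 0 < g x < #|B|.
  move=> Bx neq_xm; have := range x; rewrite !inE neq_xm Bx => /(_ isT).
  by rewrite (cardsD1 m B) Bm.
apply/linext_onP; split.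
- move=> x Bnx; rewrite ffunE ifN; first by apply: off; rewrite !inE negb_and Bnx orbT.
  by apply: contraNneq Bnx => ->.
- move=> x Bx; rewrite ffunE; have [_|neq_xm] := eqVneq x m.
    by rewrite inord_card leqnn andbT card_gt0; apply/set0Pn; exists m.
  by case/andP: (below x Bx neq_xm) => -> /ltnW.
- move=> x y Bx By; rewrite !ffunE.
  have [eq_xm|neq_xm] := eqVneq x m; have [eq_ym|neq_ym] := eqVneq y m => eq_fxy.
  + by rewrite eq_xm eq_ym.
  + by have := below y By neq_ym; rewrite -eq_fxy inord_card ltnn andbF.
  + by have := below x Bx neq_xm; rewrite eq_fxy inord_card ltnn andbF.
  + by apply: inj; rewrite // !inE ?neq_xm ?neq_ym.
- move=> x y Bx By lt_xy; rewrite !ffunE.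
  have [eq_xm|neq_xm] := eqVneq x m; first by subst x; have := max_m y By; rewrite lt_xy.
  have [_|neq_ym] := eqVneq y m; first by rewrite inord_card; case/andP: (below x Bx neq_xm).
  by apply: mono; rewrite // !inE ?neq_xm ?neq_ym.
Qed.

Lemma card_linext_on_top (B : {set T}) m :
  m \in maximals B ->
  #|[set f in linext_on B | f m == #|B| :> nat]| = nlinext_on (B :\ m).
Proof.
move=> max_m; have /maximalsP [Bm _] := max_m.
rewrite /nlinext_on.
rewrite -(card_in_imset (D := linext_on (B :\ m)) (f := extend_top B m)); last first.
  move=> g g' /linext_onP [off _ _ _] /linext_onP [off' _ _ _] eq_gg'.
  apply/ffunP => x; have [->|neq_xm] := eqVneq x m; first by rewrite off ?off' // !inE eqxx.
  by move/ffunP: eq_gg' => /(_ x); rewrite !ffunE (negbTE neq_xm).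
apply: eq_card => f; rewrite inE; apply/andP/imsetP.
- move=> [Lf /eqP top_f]; have /linext_onP [off range inj mono] := Lf.
  exists [ffun x => if x == m then ord0 else f x]; last first.
    apply/ffunP => x; rewrite !ffunE; have [->|//] := eqVneq x m.
    by apply: val_inj; rewrite /= inord_card.
  apply/linext_onP; split.
  + by move=> x; rewrite ffunE !inE negb_and negbK; case: eqP => // _; apply: off.
  + move=> x /setD1P [neq_xm Bx]; rewrite ffunE (negbTE neq_xm).
    have card_B : #|B| = #|B :\ m|.+1 by rewrite (cardsD1 m B) Bm.
    have /andP [-> le_fx] := range x Bx; rewrite -ltnS -card_B ltn_neqAle le_fx.
    by rewrite andbT -top_f; apply: contra neq_xm => /eqP/val_inj/inj -> //.
  + by move=> x y /setD1P [neq_xm Bx] /setD1P [neq_ym By]; rewrite !ffunE !ifN //; apply: inj.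
  + by move=> x y /setD1P [neq_xm Bx] /setD1P [neq_ym By]; rewrite !ffunE !ifN //; apply: mono.
- move=> [g Lg ->]; split; first exact: extend_top_linext_on.
  by rewrite ffunE eqxx inord_card.
Qed.

Lemma linext_on_top_maximal (B : {set T}) f m :
  f \in linext_on B -> m \in B -> f m = #|B| :> nat -> m \in maximals B.
Proof.
move=> /linext_onP [_ range _ mono] Bm top_m; apply: contraT => nmax_m.
have [y By lt_my] := notin_maximals Bm nmax_m.
by have := mono _ _ Bm By lt_my; rewrite top_m ltnNge; case/andP: (range y By) => _ ->.
Qed.

Lemma nlinext_on_rec (B : {set T}) :
  0 < #|B| -> nlinext_on B = \sum_(m in maximals B) nlinext_on (B :\ m).
Proof.
move=> B_gt0; pose top_at (f : {ffun T -> 'I_#|T|.+1}) m : nat := f m == #|B| :> nat.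
have one_top f : f \in linext_on B -> \sum_(m in B) top_at f m = 1.
  move=> Lf; have [m0 Bm0 top_m0] := linext_on_top Lf B_gt0.
  have /linext_onP [_ _ inj _] := Lf.
  rewrite (bigD1 m0) //= /top_at top_m0 eqxx big1 // => m /andP [Bm neq_mm0].
  apply/eqP; rewrite /top_at eqb0; apply: contra neq_mm0 => /eqP top_m.
  by apply/eqP/inj => //; apply: val_inj; rewrite /= top_m top_m0.
rewrite /nlinext_on -sum1_card (eq_bigr _ (fun f Lf => esym (one_top f Lf))).
rewrite exchange_big /= (big_setID (maximals B)) /= (setIidPr (maximals_sub B)).
rewrite [X in _ + X]big1 ?addn0 => [|m /setDP [Bm nmax_m]].
  by apply: eq_bigr => m max_m; rewrite sum_nat_of_bool card_linext_on_top.
rewrite sum_nat_of_bool; apply/eqP; rewrite cards_eq0; apply/eqP/setP => f.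
rewrite in_set0 inE; apply: contraNF nmax_m => /andP [Lf /eqP top_m].
exact: linext_on_top_maximal Lf Bm top_m.
Qed.

Lemma nlinext_on_gt0 (B : {set T}) : 0 < nlinext_on B.
Proof.
elim: {B}_.+1 {-2}B (ltnSn #|B|) => // n IH B; rewrite ltnS => le_Bn.
have [B0|[x Bx]] := set_0Vmem B.
  rewrite B0 /nlinext_on card_gt0; apply/set0Pn; exists [ffun => ord0].
  by apply/linext_onP; split=> [x _|x|x y|x y]; rewrite ?ffunE ?inE.
rewrite nlinext_on_rec; last by apply/card_gt0P; exists x.
have [m max_m _] := exists_maximal Bx; rewrite (bigD1 m) //= ltn_addr // IH //.
have /maximalsP [Bm _] := max_m.
by move: le_Bn; rewrite (cardsD1 m) Bm.
Qed.

Lemma sum_nlinext_on_eq0 (X : {set T}) (F : T -> {set T}) :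
  \sum_(w in X) nlinext_on (F w) = 0 -> X = set0.
Proof.
move/eqP; rewrite sum_nat_eq0 => /forallP null; apply/setP => w.
rewrite in_set0; apply/negP => Xw; have := null w; rewrite Xw /=.
by rewrite eqn0Ngt nlinext_on_gt0.
Qed.

Section Embedding.

Variables (U : finType) (leU : rel U) (h : U -> T).
Hypotheses (h_inj : injective h) (h_le : forall x y, leU x y = le (h x) (h y)).

Let card_U_le : #|U| <= #|T|.
Proof. by rewrite -(card_imset _ h_inj) max_card. Qed.

Let card_image : #|h @: [set: U]| = #|U|.
Proof. by rewrite card_imset // cardsT. Qed.

Let slt_h x y : slt leU x y = slt le (h x) (h y).
Proof. by rewrite /slt h_le (inj_eq h_inj). Qed.

Definition lift_labels (F : {ffun U -> 'I_#|U|}) : {ffun T -> 'I_#|T|.+1} :=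
  [ffun t => if [pick u | h u == t] is Some u then inord (F u).+1 else ord0].

Lemma lift_labels_h F u : lift_labels F (h u) = (F u).+1 :> nat.
Proof.
rewrite ffunE; case: pickP => [u' /eqP /h_inj ->|/(_ u)]; last by rewrite eqxx.
by rewrite inordK // ltnS (leq_trans (ltn_ord (F u)) card_U_le).
Qed.

Lemma lift_labels_off F t : t \notin h @: [set: U] -> lift_labels F t = ord0.
Proof.
move=> tn; rewrite ffunE; case: pickP => [u /eqP eq_ht|//].
by move: tn; rewrite -eq_ht imset_f ?inE.
Qed.

Lemma lift_labels_inj : injective lift_labels.
Proof.
move=> F G /ffunP eq_FG; apply/ffunP => u; apply: val_inj.
by apply: succn_inj; rewrite -!lift_labels_h eq_FG.
Qed.

Lemma lift_labels_linext F :
  F \in linext leU -> lift_labels F \in linext_on (h @: [set: U]).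
Proof.
rewrite inE => /andP [/injectiveP inj_F /forallP mono_F].
apply/linext_onP; split; first exact: lift_labels_off.
- by move=> _ /imsetP [u _ ->]; rewrite lift_labels_h card_image /=.
- move=> _ _ /imsetP [u _ ->] /imsetP [v _ ->] /(congr1 (@nat_of_ord _)) /=.
  by rewrite !lift_labels_h => -[] /val_inj /inj_F ->.
- move=> _ _ /imsetP [u _ ->] /imsetP [v _ ->]; rewrite !lift_labels_h ltnS -slt_h.
  by have /forallP /(_ v) /implyP := mono_F u.
Qed.

Lemma linext_on_lift_labels f :
  f \in linext_on (h @: [set: U]) -> exists2 F, F \in linext leU & f = lift_labels F.
Proof.
move=> /linext_onP [off range inj mono].
have hU u : h u \in h @: [set: U] by rewrite imset_f ?inE.
have label_lt u : (f (h u)).-1 < #|U|.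
  by have /andP [f_gt0 f_le] := range _ (hU u); rewrite -card_image prednK.
have label_gt0 u : 0 < f (h u) by case/andP: (range _ (hU u)).
pose F := [ffun u => Ordinal (label_lt u)]; exists F.
  rewrite inE; apply/andP; split.
    apply/injectiveP => u v /(congr1 (@nat_of_ord _)); rewrite /= !ffunE /= => eq_uv.
    apply: h_inj; apply: inj; rewrite ?hU //; apply: val_inj.
    by rewrite -[val (f (h u))]prednK ?label_gt0 // eq_uv prednK ?label_gt0.
  apply/forallP => u; apply/forallP => v; apply/implyP; rewrite slt_h !ffunE /= => lt_uv.
  by rewrite -ltnS prednK ?label_gt0 // (ltn_predK (mono _ _ (hU u) (hU v) lt_uv)) mono ?hU.
apply/ffunP => t; have [/imsetP [u _ ->]|tn] := boolP (t \in h @: [set: U]).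
  by apply: ord_inj; rewrite lift_labels_h ffunE /= prednK ?label_gt0.
by rewrite lift_labels_off // off.
Qed.

Lemma nlinext_embed : nlinext leU = nlinext_on (h @: [set: U]).
Proof.
rewrite /nlinext /nlinext_on -(card_imset _ lift_labels_inj); apply: eq_card => f.
apply/imsetP/idP => [[F LF ->]|/linext_on_lift_labels [F LF ->]].
  exact: lift_labels_linext.
by exists F.
Qed.

End Embedding.

Lemma nlinext_onD1_rec (B : {set T}) v :
  v \in B -> 1 < #|B| ->
  nlinext_on (B :\ v) =
    \sum_(m in maximals B :\ v) nlinext_on (B :\ m :\ v)
    + \sum_(u in new_maximals B v) nlinext_on (B :\ v :\ u).
Proof.
move=> Bv B_gt1; rewrite nlinext_on_rec; last by rewrite (cardsD1 v) Bv in B_gt1.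
rewrite (big_setID (maximals B)); congr (_ + _).
apply: eq_big => [m|m _]; last by rewrite setDDl setUC -setDDl.
rewrite in_setI in_setD1; apply/andP/andP => [[max'_m max_m]|[neq_mv max_m]].
  by have /setD1P [] := subsetP (maximals_sub _) m max'_m.
by split=> //; apply: maximalsD1.
Qed.

Lemma sum_deletions_maximals (A B : {set T}) :
  A \subset B -> 1 < #|B| ->
  \sum_(v in A) nlinext_on (B :\ v) =
  \sum_(m in maximals B)
     (\sum_(w in shift A B m) nlinext_on (B :\ m :\ w)
      + \sum_(w in (A :\ m) :&: promoted A B m) nlinext_on (B :\ m :\ w)).
Proof.
move=> sAB B_gt1; rewrite /shift; under [RHS]eq_bigr => m _ do rewrite sum_setUI.
rewrite big_split (eq_bigr _ (fun v Av => nlinext_onD1_rec (subsetP sAB v Av) B_gt1)).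
rewrite big_split /=; congr (_ + _).
  rewrite (exchange_big_dep (mem (maximals B))) /= => [|v m _]; last by case/setD1P.
  apply: eq_bigr => m max_m; apply: eq_bigl => v.
  by rewrite !in_setD1 max_m andbT eq_sym andbC.
rewrite (big_setID (maximals B)) /= [X in _ + X]big1 ?addn0; last first.
  by move=> v /setDP [_ nmax_v]; rewrite new_maximals_notin_maximals // big_set0.
rewrite [RHS](bigID (mem A)) /= [X in _ + X]big1 ?addn0; last first.
  by move=> m /andP [_ Anm]; rewrite /promoted (negbTE Anm) big_set0.
rewrite setIC; apply: eq_big => [m|m /setIP [_ Am]]; first by rewrite inE.
by rewrite /promoted Am.
Qed.

Definition deletion_bounds (B A : {set T}) : Prop :=
  [/\ is_antichain le A -> \sum_(v in A) nlinext_on (B :\ v) <= nlinext_on B,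
      is_cutset_in B A -> nlinext_on B <= \sum_(v in A) nlinext_on (B :\ v),
      is_antichain le A -> nlinext_on B = \sum_(v in A) nlinext_on (B :\ v) ->
        is_cutset_in B A &
      is_cutset_in B A -> nlinext_on B = \sum_(v in A) nlinext_on (B :\ v) ->
        is_antichain le A].

Lemma deletion_bounds_small (B A : {set T}) :
  #|B| <= 1 -> A \subset B -> deletion_bounds B A.
Proof.
move=> B_le1 sAB; have /card_le1_eqP B_triv := B_le1.
have antiA : is_antichain le A.
  apply/antichain_sltP => x y Ax Ay.
  by rewrite (B_triv x y (subsetP sAB x Ax) (subsetP sAB y Ay)) slt_irr.
have [->|[a Aa]] := set_0Vmem A.
  have maxB : is_maximal_chain_in B B.
    apply/maximal_chain_inP; split; rewrite ?chain_le1 // => D ltBD sDB.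
    by have := proper_sub_trans ltBD sDB; rewrite properxx.
  have ncut : ~ is_cutset_in B set0.
    by move=> /cutset_inP /(_ B maxB) [x _]; rewrite inE.
  have e_gt0 := nlinext_on_gt0 B.
  rewrite /deletion_bounds big_set0; split=> // _ e0.
  by rewrite e0 in e_gt0.
have Ba := subsetP sAB a Aa.
have eq_AB : A = B.
  apply/eqP; rewrite eqEcard sAB (leq_trans B_le1) // card_gt0; apply/set0Pn; by exists a.
have max_B : maximals B = B.
  have [m max_m _] := exists_maximal Ba.
  apply/eqP; rewrite eqEcard maximals_sub (leq_trans B_le1) // card_gt0.
  by apply/set0Pn; exists m.
have e_rec : nlinext_on B = \sum_(v in A) nlinext_on (B :\ v).
  by rewrite nlinext_on_rec ?max_B ?eq_AB // card_gt0; apply/set0Pn; exists a.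
have cutA : is_cutset_in B A.
  apply/cutset_inP => C maxC; have [c Cc max_c] := maximal_chain_in_top Ba maxC.
  by exists c; rewrite // eq_AB -max_B.
by rewrite /deletion_bounds -e_rec; split.
Qed.

Lemma deletion_bounds_step (B A : {set T}) :
  1 < #|B| -> A \subset B ->
  {in maximals B, forall m, deletion_bounds (B :\ m) (shift A B m)} ->
  deletion_bounds B A.
Proof.
move=> B_gt1 sAB IH.
have [b Bb] : exists b, b \in B by apply/set0Pn; rewrite -card_gt0 ltnW.
have cut_shift : is_cutset_in B A ->
    {in maximals B, forall m, is_cutset_in (B :\ m) (shift A B m)}.
  move=> cutA m max_m; have /maximalsP [Bm _] := max_m.
  have [x0 Bx0] : exists x0, x0 \in B :\ m.
    by apply/set0Pn; rewrite -card_gt0; move: B_gt1; rewrite (cardsD1 m) Bm.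
  exact: shift_cutset Bx0 cutA.
pose h m := \sum_(w in shift A B m) nlinext_on (B :\ m :\ w).
pose o m := \sum_(w in (A :\ m) :&: promoted A B m) nlinext_on (B :\ m :\ w).
have e_rec := nlinext_on_rec (ltnW B_gt1).
have s_rec : \sum_(v in A) nlinext_on (B :\ v) = \sum_(m in maximals B) (h m + o m).
  exact: sum_deletions_maximals.
have h_le_e : is_antichain le A -> {in maximals B, forall m, h m <= nlinext_on (B :\ m)}.
  by move=> antiA m /IH [+ _ _ _]; apply; apply: shift_antichain.
have e_le_h : is_cutset_in B A -> {in maximals B, forall m, nlinext_on (B :\ m) <= h m}.
  by move=> cutA m max_m; have [_ + _ _] := IH m max_m; apply; apply: cut_shift.
have o0 : is_antichain le A -> forall m, o m = 0.
  by move=> antiA m; rewrite /o overlap_antichain // big_set0.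
rewrite /deletion_bounds e_rec s_rec; split.
- move=> antiA; apply: leq_sum => m max_m; rewrite o0 ?addn0 //; exact: h_le_e.
- by move=> cutA; apply: leq_sum => m max_m; rewrite (leq_trans (e_le_h _ _ _)) ?leq_addr.
- move=> antiA eq_s; apply: (cutset_in_of_shift Bb) => m max_m.
  have [_ _ + _] := IH m max_m; apply; first exact: shift_antichain.
  apply: esym; apply: (sum_eq_leq_pointwise (h_le_e antiA)) max_m.
  by rewrite eq_s; apply: eq_bigr => m' _; rewrite o0 ?addn0.
- move=> cutA eq_s; apply: (antichain_of_shift sAB) => m max_m.
  have e_eq : nlinext_on (B :\ m) = h m + o m.
    apply: (sum_eq_leq_pointwise _ eq_s) max_m => m' max_m'.
    exact: leq_trans (e_le_h cutA m' max_m') (leq_addr _ _).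
  have o_m0 : o m = 0.
    by apply/eqP; rewrite -leqn0 -(leq_add2l (h m)) addn0 -e_eq e_le_h.
  split; last exact: sum_nlinext_on_eq0 o_m0.
  have [_ _ _ +] := IH m max_m; apply; first exact: cut_shift.
  by rewrite e_eq o_m0 addn0.
Qed.

Lemma deletion_bounds_subset (B A : {set T}) : A \subset B -> deletion_bounds B A.
Proof.
elim: {B}_.+1 {-2}B (ltnSn #|B|) A => // n IH B; rewrite ltnS => le_Bn A sAB.
have [B_le1|B_gt1] := leqP #|B| 1; first exact: deletion_bounds_small.
apply: deletion_bounds_step => // m /maximalsP [Bm _].
apply: (IH (B :\ m)); last exact: (shift_sub m sAB).
by move: le_Bn; rewrite (cardsD1 m) Bm.
Qed.

Lemma nlinext_setT : nlinext le = nlinext_on [set: T].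
Proof. by rewrite (@nlinext_embed T le id) // imset_id. Qed.

Lemma nlinext_delv v : nlinext (delv_rel le v) = nlinext_on ([set: T] :\ v).
Proof.
rewrite (@nlinext_embed _ (delv_rel le v) val val_inj) //; congr nlinext_on.
apply/setP => t; rewrite !inE andbT; apply/imsetP/idP => [[u _ ->]|neq_tv].
  exact: (valP u).
by exists (exist _ t neq_tv).
Qed.

Lemma is_cutset_setT (S : {set T}) : is_cutset le S = is_cutset_in [set: T] S.
Proof.
apply: eq_forallb => C; rewrite /is_maximal_chain /is_maximal_chain_in subsetT /=.
by congr (_ && _ ==> _); apply: eq_forallb => D; rewrite subsetT andbT.
Qed.

End Poset.

Theorem corollary3p10 (T : finType) (le : rel T) (HP : is_porder le) :
  (forall A : {set T}, is_antichain le A ->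
     (\sum_(v in A) nlinext (delv_rel le v) <= nlinext le)%N) /\
  (forall S : {set T}, is_cutset le S ->
     (nlinext le <= \sum_(v in S) nlinext (delv_rel le v))%N) /\
  (forall I : {set T}, is_cutset le I \/ is_antichain le I ->
     (nlinext le = \sum_(v in I) nlinext (delv_rel le v) <->
      is_cutset le I /\ is_antichain le I)).
Proof.
have bounds A := deletion_bounds_subset HP (subsetT A).
have sum_delv A : \sum_(v in A) nlinext (delv_rel le v) =
                  \sum_(v in A) nlinext_on le ([set: T] :\ v).
  by apply: eq_bigr => v _; rewrite nlinext_delv.
rewrite nlinext_setT; split; [|split] => [A|S|I].
- by rewrite sum_delv; case: (bounds A).
- by rewrite is_cutset_setT sum_delv; case: (bounds S).
rewrite !is_cutset_setT sum_delv; have [anti_le cut_le anti_eq cut_eq] := bounds I.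
move=> cut_or_anti; split=> [eq_e|[cutI antiI]].
  by case: cut_or_anti => [cutI|antiI]; split; auto.
by apply/eqP; rewrite eqn_leq cut_le // anti_le.
Qed.
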